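(* For every positive integer $k$ and every prime number $p$, $$v_p\bigl(F_{kp,k}\bigr) = -k.$$
   Context: For $n,k \in \mathbb{N}$ with $n \geq k$, $$F_{n,k} = \sum_{\substack{i_1,\dots,i_k \in \mathbb{N}^* \\ i_1+\dots+i_k = n}} \frac{1}{i_1 i_2 \cdots i_k},$$ where $\mathbb{N}^*$ denotes the positive integers. $v_p$ denotes the $p$-adic valuation on $\mathbb{Q}^*$. *)

From HB Require Import structures.
From mathcomp Require Import all_boot all_order all_algebra.
Set Implicit Arguments. Unset Strict Implicit. Unset Printing Implicit Defensive.
Import Order.TTheory GRing.Theory Num.Theory.

Local Open Scope ring_scope.

(* Tuples are encoded as finite functions from ordinals k to ordinals n+1
   (every positive part is automatically <= n). *)
Definition F (n k : nat) : rat :=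
  \sum_(f : {ffun 'I_k -> 'I_n.+1} |
          [forall j, (0 < (f j : nat))%N] && ((\sum_(j < k) (f j : nat))%N == n))
     \prod_(j < k) ((f j : nat)%:R)^-1.

(* p-adic valuation of a rational number q = numq q / denq q
   (meaningful for q <> 0; gives 0 at q = 0). *)
Definition vp (p : nat) (q : rat) : int :=
  (logn p `|numq q|)%:Z - (logn p `|denq q|)%:Z.

From HB Require Import structures.
From mathcomp Require Import all_boot all_order all_algebra.
From mathcomp Require Import zify ring.
Import Order.TTheory GRing.Theory Num.Theory.
Local Open Scope ring_scope.

(* In F_{kp,k} the composition (p, ..., p) contributes p^-k.  Every other
   composition (i_1, ..., i_k) of kp has v_p(i_1 ... i_k) < k: since
   p * v_p(i) <= p^(v_p i) <= i, summing gives p * v_p(i_1 ... i_k) <= kp, and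
   equality forces every i_j = p.  Hence every other term has the form
   p^-k * p * y with y a p-integral rational (a fraction whose denominator is
   prime to p), so F_{kp,k} = p^-k * (1 + p * y) with y p-integral, whose
   valuation is -k. *)

Definition p_integral (p : nat) (q : rat) :=
  exists (a : int) (b : nat), ~~ (p %| b)%N /\ q = a%:~R / b%:R.

Section PIntegral.

Variable p : nat.
Hypothesis p_prime : prime p.

Lemma p_integral0 : p_integral p 0.
Proof.
exists 0, 1%N; split; last by rewrite mul0r.
by rewrite dvdn1 gtn_eqF // prime_gt1.
Qed.

Lemma p_integralD x y : p_integral p x -> p_integral p y -> p_integral p (x + y).
Proof.
move=> [a1 [b1 [pNb1 ->]]] [a2 [b2 [pNb2 ->]]].
exists (a1 * b2%:Z + a2 * b1%:Z), (b1 * b2)%N; split.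
  by rewrite Euclid_dvdM // negb_or pNb1 pNb2.
have b1R : (b1%:R : rat) != 0 by rewrite pnatr_eq0; apply: contra pNb1 => /eqP ->.
have b2R : (b2%:R : rat) != 0 by rewrite pnatr_eq0; apply: contra pNb2 => /eqP ->.
rewrite rmorphD !rmorphM /= !pmulrn; field.
by rewrite b1R b2R.
Qed.

Lemma vp_frac (k : nat) (A : int) (b : nat) :
  ~~ (p %| `|A|)%N -> ~~ (p %| b)%N -> vp p (A%:~R / (p ^ k * b)%:R) = - (k%:Z).
Proof.
move=> pNA pNb.
set B := (p ^ k * b)%N; set x : rat := _ / _.
have p_gt0 := prime_gt0 p_prime.
have b_gt0 : (0 < b)%N by rewrite lt0n; apply: contra pNb => /eqP ->.
have A_neq0 : A != 0 by apply: contra pNA => /eqP ->.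
have BR : (B%:R : rat) != 0 by rewrite pnatr_eq0 -lt0n muln_gt0 expn_gt0 p_gt0.
have x_neq0 : x != 0 by rewrite mulf_neq0 // ?intr_eq0 // invr_eq0.
(* cross-multiplying  numq x / denq x = A / B  gives |numq x| B = |A| |denq x| *)
have cross : (`|numq x| * B = `|A| * `|denq x|)%N.
  rewrite -[B in LHS]/(`|B%:Z|)%N -!abszM; congr absz; apply: (@intr_inj rat).
  rewrite rmorphM [RHS]rmorphM /= -pmulrn numqE /x; field; exact: BR.
have := congr1 (logn p) cross.
rewrite !lognM ?muln_gt0 ?expn_gt0 ?p_gt0 ?absz_gt0 ?numq_eq0 ?denq_neq0 //.
rewrite pfactorK // (logn_coprime (m := b)) ?prime_coprime //.
rewrite (logn_coprime (m := `|A|)) ?prime_coprime // /vp; lia.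
Qed.

Lemma vp_pinvk_1pD (k : nat) (y : rat) :
  p_integral p y -> vp p ((p%:R)^-1 ^+ k * (1 + p%:R * y)) = - (k%:Z).
Proof.
move=> [a [b [pNb ->]]].
have pR : (p%:R : rat) != 0 by rewrite pnatr_eq0 gtn_eqF // prime_gt0.
have bR : (b%:R : rat) != 0 by rewrite pnatr_eq0; apply: contra pNb => /eqP ->.
have -> : (p%:R)^-1 ^+ k * (1 + p%:R * (a%:~R / b%:R))
          = (b%:Z + p%:Z * a)%:~R / (p ^ k * b)%N%:R :> rat.
  rewrite rmorphD rmorphM /= -!pmulrn natrM natrX exprVn; field.
  by rewrite expf_neq0 // bR.
apply: vp_frac => //; apply: contra pNb => p_dvd_sum.
have p_dvd_pa : (p%:Z %| p%:Z * a)%Z by rewrite dvdz_mulr.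
have : (p%:Z %| b%:Z + p%:Z * a)%Z by rewrite dvdzE.
by rewrite (rpredDr _ p_dvd_pa) dvdzE.
Qed.

Lemma inv_small_valuation (k P : nat) : (0 < P)%N -> (logn p P < k)%N ->
  exists y, p_integral p y /\ (P%:R)^-1 = (p%:R)^-1 ^+ k * p%:R * y :> rat.
Proof.
move=> P_gt0 ltPk.
have [m copm Pm] := pfactor_coprime p_prime P_gt0.
set s := logn p P in ltPk Pm.
have m_gt0 : (0 < m)%N by move: P_gt0; rewrite Pm muln_gt0 => /andP [].
exists ((p ^ (k - s - 1))%N%:Z%:~R / m%:R); split.
  by exists (p ^ (k - s - 1))%N%:Z, m; rewrite -prime_coprime.
have pR : (p%:R : rat) != 0 by rewrite pnatr_eq0 gtn_eqF // prime_gt0.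
have mR : (m%:R : rat) != 0 by rewrite pnatr_eq0 -lt0n.
have k_split : k = (s + 1 + (k - s - 1))%N by lia.
rewrite Pm -pmulrn !natrM !natrX exprVn {1}k_split !exprD expr1; field.
by rewrite mR pR !expf_neq0.
Qed.

End PIntegral.

Lemma logn_prod (p : nat) (I : Type) (r : seq I) (E : I -> nat) :
  (forall i, (0 < E i)%N) ->
  logn p (\prod_(i <- r) E i) = (\sum_(i <- r) logn p (E i))%N.
Proof.
move=> E_gt0; elim: r => [|i r IH]; first by rewrite !big_nil logn1.
by rewrite !big_cons lognM ?IH ?prodn_gt0.
Qed.

(* p * v_p(m) <= p^(v_p m) <= m. *)
Lemma mul_logn_le (p m : nat) : prime p -> (0 < m)%N -> (p * logn p m <= m)%N.
Proof.
move=> p_prime m_gt0; apply: (@leq_trans (p ^ logn p m)).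
  case: (logn p m) => [|a]; first by rewrite muln0.
  by rewrite expnS leq_mul2l ltn_expl ?orbT ?prime_gt1.
by apply: dvdn_leq => //; apply: pfactor_dvdnn.
Qed.

Lemma sum_squeeze (I : finType) (E1 E2 : I -> nat) :
  (forall i, E1 i <= E2 i)%N -> (\sum_i E2 i <= \sum_i E1 i)%N ->
  forall i, E1 i = E2 i.
Proof.
move=> le12 leS i.
have L := @leqif_sum I predT (fun i => E1 i == E2 i) E1 E2
  (fun i _ => leqif_eq (le12 i)).
have : (\sum_i E1 i == \sum_i E2 i) by rewrite eqn_leq leS L.1.
by rewrite L.2 => /forallP /(_ i) /implyP /(_ isT) /eqP.
Qed.

Lemma composition_large_valuation (k p : nat) (E : 'I_k -> nat) : prime p ->
  (forall j, 0 < E j)%N -> (\sum_j E j)%N = (k * p)%N ->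
  (k <= logn p (\prod_j E j))%N -> forall j, E j = p.
Proof.
move=> p_prime E_gt0 sumE; rewrite logn_prod // => le_k_val.
have p_gt0 := prime_gt0 p_prime.
have pvalE : forall j, (p * logn p (E j))%N = E j.
  apply: sum_squeeze => [j|]; first exact: mul_logn_le.
  by rewrite sumE -big_distrr /= [(k * p)%N]mulnC leq_mul2l le_k_val orbT.
have sum_val : (\sum_j logn p (E j))%N = k.
  apply/eqP; rewrite -(eqn_pmul2l p_gt0) big_distrr /=.
  under eq_bigr => j _ do rewrite pvalE.
  by rewrite sumE mulnC.
have val1 : forall j, 1%N = logn p (E j).
  apply: (@sum_squeeze _ (fun _ => 1%N)) => [j|].
    by rewrite lt0n; apply/eqP => v0; have := E_gt0 j; rewrite -pvalE v0 muln0.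
  by rewrite sum1_card card_ord sum_val.
by move=> j; rewrite -pvalE -val1 muln1.
Qed.

Theorem lemma3 (k p : nat) (hk : (0 < k)%N) (hp : prime p) :
  vp p (F (k * p) k) = - (k%:Z).
Proof.
have lt_p_kp : (p < (k * p).+1)%N by rewrite ltnS leq_pmull.
pose f0 : {ffun 'I_k -> 'I_(k * p).+1} := [ffun j => inord p].
have f0E j : (f0 j : nat) = p by rewrite ffunE inordK.
rewrite /F (bigD1 f0) /=; last first.
  rewrite (eq_bigr (fun=> p)) // sum_nat_const card_ord eqxx andbT.
  by apply/forallP => j; rewrite f0E prime_gt0.
rewrite (eq_bigr (fun=> (p%:R)^-1)) => [|j _]; last by rewrite f0E.
rewrite prodr_const card_ord.
set c : rat := (p%:R)^-1 ^+ k.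
suff [y [py ->]] : exists y, p_integral p y /\
   \sum_(f : {ffun 'I_k -> 'I_(k * p).+1} | ([forall j, (0 < (f j : nat))%N] &&
              ((\sum_(j < k) (f j : nat))%N == (k * p)%N)) && (f != f0))
       \prod_(j < k) ((f j : nat)%:R)^-1 = c * p%:R * y.
  by rewrite -[X in X + _]mulr1 -mulrA -mulrDr vp_pinvk_1pD.
apply: (big_ind (fun z => exists y, p_integral p y /\ z = c * p%:R * y)).
- by exists 0; rewrite mulr0; split; first exact: p_integral0.
- move=> _ _ [y1 [py1 ->]] [y2 [py2 ->]].
  by exists (y1 + y2); rewrite mulrDr; split; first exact: p_integralD.
(* a remaining term has v_p(product) < k, else it would be f0 *)
move=> f /andP [/andP [/forallP f_gt0 /eqP sumf] f_neq_f0].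
rewrite prodfV -natr_prod; apply: inv_small_valuation => //; first by rewrite prodn_gt0.
rewrite ltnNge; apply: contra f_neq_f0 => /composition_large_valuation fp.
by apply/eqP/ffunP => j; apply: val_inj; rewrite /= f0E (fp hp).
Qed.
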